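(* Let $\mathcal{G}$ be a g-sequent, $C$ a constraint, and $\mathrm{H}:=\mathrm{H}(\mathbf{G}(C))$. If $\mathrm{H}'$ is a fracturable subset of $\mathrm{H}$ (in $\mathsf{DG}(\mathrm H)$) and $\mathcal{G}$ satisfies $C$, then $\overline{\mathrm{H}'}(\mathcal{G})$ satisfies $C\ominus\mathbf{G}(\mathrm{H}')$.
   Context: Fix a countably infinite set $\mathtt{S}$ of sequents (atomic labels), a set $\mathcal{U}$ of vertices, and a non-empty finite set $\mathtt{E}$ of edge types. A g-sequent is $\mathcal{G}=(\mathcal{V},\mathcal{E},\mathcal{L})$ with $\mathcal{V}\subseteq\mathcal{U}$, $\mathcal{E}=\{\mathcal{E}_a\mid a\in\mathtt{E}\}$, $\mathcal{E}_a\subseteq\mathcal{V}\times\mathcal{V}$, $\mathcal{L}:\mathcal{V}\to\mathtt{S}$; $\mathcal U(\mathcal G)=\mathcal V$; written $\Gamma\vdash\Delta$ with $\Gamma$ the set of edge atoms $w\mathcal{E}_a u$ and $\Delta$ the set of prefixed sequents $w:S$; commas denote disjoint union. Let $\overline{\mathtt E}=\{\bar a\mid a\in\mathtt E\}$, $\bar{\bar z}=z$, $\overline{x_1\cdots x_n}=\bar x_n\cdots\bar x_1$, $\varepsilon$ empty string. Paths: $\mathcal{G}\models u\xrightarrow{a}w$ iff $(u,w)\in\mathcal{E}_a$; $u\xrightarrow{\bar a}w$ iff $(w,u)\in\mathcal{E}_a$; $u\xrightarrow{\varepsilon}w$ iff $u=w$; $u\xrightarrow{xs}w$ iff some $v$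 has $u\xrightarrow{x}v$, $v\xrightarrow{s}w$; $u\xrightarrow{\mathscr L}w$ iff $u\xrightarrow{s}w$ for some $s\in\mathscr L$. An $\mathtt E$-system is a finite set $\mathbf G$ of production rules $x\longrightarrow t$ ($x\in\mathtt E\cup\overline{\mathtt E}$, $t$ a string) such that $x\longrightarrow t\in\mathbf G$ iff $\bar x\longrightarrow\bar t\in\mathbf G$; $\mathbf G(s)=\{t\mid s\longrightarrow^*_{\mathbf G}t\}$ ($\longrightarrow^*_{\mathbf G}$: reflexive-transitive closure of rewriting one occurrence of a left side). For $p=x\longrightarrow t$, $\bar p=\bar x\longrightarrow\bar t$; $(p,\bar p)$ is a production pair; $P(\mathbf G)$ is the set of production pairs in $\mathbf G$. A constraint is a finite tree $C=(V,E,L)$, $V\subseteq\mathcal U$, each edge labelled $L(w,u)=\mathbf G'(a)$ for some $a\in\mathtt E$ and $\mathtt E$-system $\mathbf G'$ (which is said to participate in $C$); $\mathbf G(C)$ is the union of all $\mathtt E$-systems participating in $C$. $\mathcal G$ satisfies $C$ iff $V\subseteq\mathcal U(\mathcal G)$ and $\mathcal G\models w\xrightarrow{\mathbf G'(a)}u$ for every edge with $L(w,u)=\mathbf G'(a)$. Fracture: $C\ominus\mathbf G$ replaces every label $\mathbf G'(a)$ by $(\mathbf G'\setminus\mathbf G)(a)$. Horn rules: for $s=x_1\cdots x_n$, $w\mathcal E_s u$ abbreviates atoms $w\mathcal E_{x_1}v_1,\dots,v_{n-1}\mathcal E_{x_n}u$, with $v\mathcal E_{\bar a}z$ meaning $z\mathcal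 E_a v$ and $w\mathcal E_\varepsilon u$ meaning $w=u$. Forward Horn rule $h_f$: premise $\Gamma,w\mathcal{E}_s u,w\mathcal{E}_a u\vdash\Delta$, conclusion $\Gamma,w\mathcal{E}_s u\vdash\Delta$; backward Horn rule $h_b$: same with $w\mathcal E_a u$ replaced by $u\mathcal E_a w$. $\mathbf{G}(h_f)=\{a\longrightarrow s,\bar a\longrightarrow\bar s\}$, $\mathbf{G}(h_b)=\{\bar a\longrightarrow s,a\longrightarrow\bar s\}$, $\mathbf G(\mathrm H)=\bigcup_{h\in\mathrm H}\mathbf G(h)$, $P(h)=P(\mathbf G(h))$. For a production pair $(p,\bar p)$ with $p=a\longrightarrow s$ (resp. $p=\bar a\longrightarrow s$), $a\in\mathtt E$, $\mathrm H(p,\bar p)$ is the singleton of the corresponding forward (resp. backward) Horn rule; $\mathrm H(\mathbf G)=\bigcup_{(p,\bar p)\in P(\mathbf G)}\mathrm H(p,\bar p)$. Dependency graph: for distinct production pairs with $p=x\longrightarrow s$, $p'=y\longrightarrow t$, $(p,\bar p)\sqsubset(p',\bar p')$ iff $s$ or $\bar s$ contains the letter $y$; $\sqsubseteq$ is the reflexive-transitive closure. For Horn rules, $\mathsf{DG}(\mathrm H)=(\mathrm H,\sqsubseteq')$ with $h\sqsubseteq' h'$ iff the production pair of $h$ is $\sqsubseteq$ the production pair of $h'$. A subset $V'$ of a dependency graph $(V,\sqsubseteq)$ is fracturable iff there are no $v\in V'$, $v'\in V\setminus V'$ with $v\sqsubseteq v'$. Saturation: the inverse $\bar h$ of a Horn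 rule $h$ maps the conclusion of an instance of $h$ to its premise (adds the edge atom). $\overline{\mathrm H'}(\mathcal G)$ is obtained from $\mathcal G$ by repeatedly applying inverses of rules in $\mathrm H'$ as long as this changes the g-sequent. *)

From mathcomp Require Import all_boot.
From Stdlib Require List.

Set Implicit Arguments.
Unset Strict Implicit.
Unset Printing Implicit Defensive.

(* Letters of E ∪ Ē : (a, false) is a, (a, true) is ā.                    *)
Notation letter E := (E * bool)%type.
Notation rule E := (letter E * seq (letter E))%type.

Section Defs.
Variable E : finType.

Definition barl (x : letter E) : letter E := (x.1, ~~ x.2).
Definition bars (s : seq (letter E)) : seq (letter E) := rev (map barl s).
Definition barr (p : rule E) : rule E := (barl p.1, bars p.2).

Definition is_system (G : seq (rule E)) : Prop :=
  forall p, p \in G -> barr p \in G.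

Inductive rtc {T : Type} (R : T -> T -> Prop) : T -> T -> Prop :=
| rtc_refl x : rtc R x x
| rtc_step x y z : R x y -> rtc R y z -> rtc R x z.

Definition rewrite1 (G : seq (rule E)) (s t : seq (letter E)) : Prop :=
  exists s1 s2 x r, (x, r) \in G /\ s = s1 ++ x :: s2 /\ t = s1 ++ r ++ s2.

Definition lang (G : seq (rule E)) (s t : seq (letter E)) : Prop :=
  rtc (rewrite1 G) s t.

Variables U S : Type.

(* g-sequents (V, {E_a}, L) ; the vertex set is a predicate on U *)
Record gseq := GSeq {
  gvert : U -> Prop;
  gedge : E -> U -> U -> Prop;
  glab  : U -> S }.

Definition is_gseq (G : gseq) : Prop :=
  forall a w u, gedge G a w u -> gvert G w /\ gvert G u.

Definition ledge (R : E -> U -> U -> Prop) (x : letter E) (w v : U) : Prop :=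
  if x.2 then R x.1 v w else R x.1 w v.

Fixpoint walk (R : E -> U -> U -> Prop) (s : seq (letter E)) (w u : U) : Prop :=
  match s with
  | [::] => w = u
  | x :: s' => exists v, ledge R x w v /\ walk R s' v u
  end.

Definition models_lang (G : gseq) (G' : seq (rule E)) (a : E) (w u : U) : Prop :=
  exists t, lang G' [:: (a, false)] t /\ walk (gedge G) t w u.

(* Constraints: finite trees whose edges (w,u) are labelled by G'(a),
   stored as the pair (G', a). *)
Record constr := Constr {
  cverts : seq U;
  cedges : seq (U * U * (seq (rule E) * E)) }.

Definition cadj (C : constr) (x y : U) : Prop :=
  exists l, List.In (x, y, l) (cedges C) \/ List.In (y, x, l) (cedges C).

Definition is_tree (C : constr) : Prop :=
  [/\ cverts C <> [::],
      List.NoDup (cverts C),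
      (forall w u l, List.In (w, u, l) (cedges C) ->
          List.In w (cverts C) /\ List.In u (cverts C)),
      (forall x y, List.In x (cverts C) -> List.In y (cverts C) -> rtc (cadj C) x y)
    & size (cedges C) = (size (cverts C)).-1 ].

Definition is_constraint (C : constr) : Prop :=
  is_tree C /\ (forall w u G' a, List.In (w, u, (G', a)) (cedges C) -> is_system G').

Definition sys_of_constr (C : constr) : seq (rule E) :=
  flatten (map (fun e => e.2.1) (cedges C)).

Definition satisfies (G : gseq) (C : constr) : Prop :=
  (forall v, List.In v (cverts C) -> gvert G v) /\
  (forall w u G' a, List.In (w, u, (G', a)) (cedges C) -> models_lang G G' a w u).

Definition fracture (C : constr) (G : seq (rule E)) : constr :=
  Constr (cverts C)
    (map (fun e => (e.1, ([seq p <- e.2.1 | p \notin G], e.2.2))) (cedges C)).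

(* Horn rules: (true, a, s) is the forward rule h_f with string s,
   (false, a, s) the backward rule h_b. *)
Definition horn := (bool * E * seq (letter E))%type.

(* the production p with G(h) = {p, p̄} : a -> s (forward), ā -> s (backward) *)
Definition horn_rule (h : horn) : rule E := ((h.1.2, ~~ h.1.1), h.2).

Definition horn_sys (h : horn) : seq (rule E) := [:: horn_rule h; barr (horn_rule h)].

Definition hsys (H : seq horn) : seq (rule E) := flatten (map horn_sys H).

Definition horn_of_rule (p : rule E) : horn := (~~ p.1.2, p.1.1, p.2).

Definition H_of (G : seq (rule E)) : seq horn := map horn_of_rule G.

(* dependency graph on production pairs of G (pairs represented by either member) *)
Definition dep_step (G : seq (rule E)) (p q : rule E) : Prop :=
  [/\ p \in G, q \in G, q != p, q != barr p & (q.1 \in p.2) || (q.1 \in bars p.2)].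

Definition dep (G : seq (rule E)) : rule E -> rule E -> Prop := rtc (dep_step G).

Definition hdep (H : seq horn) (h h' : horn) : Prop :=
  dep (hsys H) (horn_rule h) (horn_rule h').

Definition fracturable (H H' : seq horn) : Prop :=
  {subset H' <= H} /\
  (forall h h', h \in H' -> h' \in H -> h' \notin H' -> ~ hdep H h h').

Definition horn_closed (H' : seq horn) (G : gseq) (R : E -> U -> U -> Prop) : Prop :=
  forall (fwd : bool) (a : E) (s : seq (letter E)) (w u : U),
    (fwd, a, s) \in H' -> gvert G w -> gvert G u -> walk R s w u ->
    (if fwd then R a w u else R a u w).

Definition sat_edge (H' : seq horn) (G : gseq) (a : E) (w u : U) : Prop :=
  forall R : E -> U -> U -> Prop,
    (forall b x y, gedge G b x y -> R b x y) -> horn_closed H' G R -> R a w u.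

Definition saturate (H' : seq horn) (G : gseq) : gseq :=
  GSeq (gvert G) (sat_edge H' G) (glab G).

End Defs.

From mathcomp Require Import all_boot.
From Stdlib Require List.

Set Implicit Arguments.
Unset Strict Implicit.
Unset Printing Implicit Defensive.

(* Let G~ be the saturation of G under the inverses of H'.
   For an edge (w,u) of C labelled G'(a), G has a walk w --t--> u with
   a =>* t in G'.  We replay this derivation backwards inside G~: each
   step that uses a rule x -> r of G(H') is undone, since G~ is closed
   under that rule (a walk along r yields a step along x), and each other
   step is kept.  The undone steps never interfere with the kept ones:
   by fracturability, no letter of r is the left side of a rule of
   G' outside G(H'), so r stays frozen under the remaining derivation. *)

Section Walks.
Variables (E : finType) (U : Type).
Implicit Types (R : E -> U -> U -> Prop) (s : seq (letter E)).

Lemma walk_cat R s1 s2 w u :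
  walk R (s1 ++ s2) w u <-> exists v, walk R s1 w v /\ walk R s2 v u.
Proof.
elim: s1 w => [|x s1 IH] w /=.
  by split=> [h|[v [-> //]]]; exists w.
split=> [[v [hx /IH [v' [h1 h2]]]]|[v' [[v [hx h1]] h2]]].
  by exists v'; split=> //; exists v.
by exists v; split=> //; apply/IH; exists v'.
Qed.

Lemma walk_mono R1 R2 s w u :
  (forall b x y, R1 b x y -> R2 b x y) -> walk R1 s w u -> walk R2 s w u.
Proof.
move=> sub; elim: s w => [|x s IH] w //= [v [hx hw]].
by exists v; split; [move: hx; rewrite /ledge; case: x.2; apply: sub | exact: IH].
Qed.

Lemma walk_bars R s w u : walk R (bars s) w u -> walk R s u w.
Proof.
elim: s w u => [|x s IH] w u /=; first by move=> ->.
rewrite /bars /= rev_cons -cats1 => /walk_cat [v [hs [v' [hx <-]]]].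
by exists v; split; [move: hx; rewrite /ledge /barl /=; case: x.2 | exact: IH].
Qed.

End Walks.

Section Rewriting.
Variable E : finType.
Implicit Types (G : seq (rule E)) (s t : seq (letter E)).

Lemma cat_split (T : Type) (s1 s2 A B : seq T) x :
  s1 ++ x :: s2 = A ++ B ->
  (exists m, A = s1 ++ x :: m /\ s2 = m ++ B) \/
  (exists m, B = m ++ x :: s2 /\ s1 = A ++ m).
Proof.
elim: s1 A => [|y s1 IH] [|z A] /=.
- by move=> <-; right; exists [::].
- by case=> -> ->; left; exists A.
- by move=> <-; right; exists (y :: s1).
- by case=> -> /IH [[m [-> ->]]|[m [-> ->]]]; [left|right]; exists m.
Qed.

Lemma lang_trans G s1 s2 s3 : lang G s1 s2 -> lang G s2 s3 -> lang G s1 s3.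
Proof. by elim=> [//|x y z hr _ IH] h; apply: rtc_step hr (IH h). Qed.

Lemma lang_cat G A A' B B' :
  lang G A A' -> lang G B B' -> lang G (A ++ B) (A' ++ B').
Proof.
move=> hA hB; apply: (@lang_trans _ _ (A' ++ B)).
  elim: hA => [x|x y z [s1 [s2 [x' [r [hm [-> ->]]]]]] _ IH]; first exact: rtc_refl.
  by apply: rtc_step IH; exists s1, (s2 ++ B), x', r; rewrite -!catA.
elim: hB => [x|x y z [s1 [s2 [x' [r [hm [-> ->]]]]]] _ IH]; first exact: rtc_refl.
by apply: rtc_step IH; exists (A' ++ s1), s2, x', r; rewrite !catA.
Qed.

Lemma lang_split G A B t :
  lang G (A ++ B) t -> exists A' B', [/\ t = A' ++ B', lang G A A' & lang G B B'].
Proof.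
move eAB: (A ++ B) => s h; elim: h A B eAB => [x|x y z hr _ IH] A B eAB.
  by exists A, B; split=> //; apply: rtc_refl.
case: hr => [s1 [s2 [x' [r [hm [ex ey]]]]]].
rewrite ex in eAB; case: (cat_split (esym eAB)) => [[m [eA eB]]|[m [eB eA]]].
- case: (IH (s1 ++ r ++ m) B); first by rewrite ey eB !catA.
  move=> A' [B' [-> h1 h2]].
  by exists A', B'; split=> //; apply: rtc_step h1; exists s1, m, x', r; rewrite eA.
- case: (IH A (m ++ r ++ s2)); first by rewrite ey eA !catA.
  move=> A' [B' [-> h1 h2]].
  by exists A', B'; split=> //; apply: rtc_step h2; exists m, s2, x', r; rewrite eB.
Qed.

Lemma lang_frozen G s t : (forall q, q \in G -> q.1 \notin s) -> lang G s t -> t = s.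
Proof.
move=> frozen hl; case: hl frozen => [//|x y z [s1 [s2 [x' [r [hm [ex _]]]]]] _] frozen.
by move: (frozen _ hm); rewrite /= ex mem_cat in_cons eqxx orbT.
Qed.

End Rewriting.

Section Transfer.
Variables (E : finType) (U : Type) (V : U -> Prop) (R : E -> U -> U -> Prop).

Hypothesis R_dom : forall b x y, R b x y -> V x /\ V y.

Definition rules_closed (P : seq (rule E)) : Prop :=
  forall p v1 v2, p \in P -> V v1 -> V v2 -> walk R p.2 v1 v2 -> ledge R p.1 v1 v2.

Lemma walk_vert s w u : V w -> walk R s w u -> V u.
Proof.
elim: s w => [|x s IH] w /=; first by move=> ? <-.
move=> Vw [v [hx hw]]; apply: IH hw.
by move: hx; rewrite /ledge; case: x.2 => /R_dom [].
Qed.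

Lemma lang_transfer (P Gp : seq (rule E)) :
  rules_closed P ->
  (forall p q, p \in P -> q \in Gp -> q.1 \in p.2 -> q \in P) ->
  forall s t w u, lang Gp s t -> V w -> walk R t w u ->
  exists2 t', lang [seq q <- Gp | q \notin P] s t' & walk R t' w u.
Proof.
move=> closedP upP s t w u hl; elim: hl w u => [x|x y z hr _ IH] w u Vw hw.
  by exists x => //; apply: rtc_refl.
have [t1 hl1 hw1] := IH w u Vw hw.
case: hr => [s1 [s2 [x' [r [hm [ex ey]]]]]].
have [inP | notinP] := boolP ((x', r) \in P); last first.
  exists t1 => //; apply: rtc_step hl1.
  by exists s1, s2, x', r; rewrite mem_filter notinP.
have r_frozen : forall q, q \in [seq q <- Gp | q \notin P] -> q.1 \notin r.
  move=> q; rewrite mem_filter => /andP [qP qG].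
  by apply: contra qP => qr; apply: (upP (x', r)).
rewrite ey in hl1; have [A' [Z [eZ hA hZ]]] := lang_split hl1.
have [R' [B' [eR hR hB]]] := lang_split hZ.
rewrite eZ eR (lang_frozen r_frozen hR) in hw1.
case/walk_cat: hw1 => v1 [hwA /walk_cat [v2 [hwr hwB]]].
have V1 := walk_vert Vw hwA; have V2 := walk_vert V1 hwr.
exists (A' ++ x' :: B').
  by rewrite ex; apply: lang_cat hA (lang_cat (rtc_refl _ [:: x']) hB).
by apply/walk_cat; exists v1; split=> //; exists v2; split=> //; exact: (closedP (x', r)).
Qed.

End Transfer.

Section Saturation.
Variables (E : finType) (U S : Type) (G : gseq E U S) (H' : seq (horn E)).

Lemma sat_base b x y : gedge G b x y -> sat_edge H' G b x y.
Proof. by move=> h R base _; apply: base. Qed.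

Lemma sat_dom : is_gseq G -> forall b x y, sat_edge H' G b x y -> gvert G x /\ gvert G y.
Proof.
move=> hg b x y h; apply: (h (fun _ v1 v2 => gvert G v1 /\ gvert G v2)); first exact: hg.
by move=> fwd a s v1 v2 _ ? ?; case: fwd.
Qed.

Lemma sat_horn_closed : horn_closed H' G (sat_edge H' G).
Proof.
move=> fwd a s w u hin Vw Vu hw; case: fwd hin => hin R base cl;
by apply: (cl _ a s w u hin Vw Vu); apply: walk_mono hw => b x y; apply.
Qed.

Lemma in_hsys p :
  p \in hsys H' <-> exists2 h, h \in H' & p = horn_rule h \/ p = barr (horn_rule h).
Proof.
split=> [/flatten_mapP [h hin]|[h hin ep]].
  by rewrite !inE => /orP [] /eqP ->; exists h => //; [left|right].
by apply/flatten_mapP; exists h => //; rewrite !inE; case: ep => ->; rewrite eqxx ?orbT.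
Qed.

Lemma sat_rules_closed : rules_closed (gvert G) (sat_edge H' G) (hsys H').
Proof.
move=> p v1 v2 /in_hsys [[[fwd a] s] hin [->|->]] V1 V2 /= hw.
  by have := sat_horn_closed hin V1 V2 hw; rewrite /ledge /=; case: fwd {hin}.
have := sat_horn_closed hin V2 V1 (walk_bars hw).
by rewrite /ledge /=; case: fwd {hin}.
Qed.

End Saturation.

Lemma horn_rule_of (E : finType) (q : rule E) : horn_rule (horn_of_rule q) = q.
Proof. by case: q => [[e b] r]; rewrite /horn_rule /horn_of_rule /= negbK. Qed.

(* Fracturability: a rule of G(C) rewriting a letter of the right side of a
   rule of G(H') depends on it, hence lies in G(H') itself. *)
Lemma fracturable_upward (E : finType) (Gc : seq (rule E)) (H' : seq (horn E)) p q :
  fracturable (H_of Gc) H' ->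
  p \in hsys H' -> q \in Gc -> q.1 \in p.2 -> q \in hsys H'.
Proof.
move=> [sub indep] /in_hsys [h hin ep] qGc qp.
have qH : horn_of_rule q \in H_of Gc by apply: map_f.
have [qH'|qH'] := boolP (horn_of_rule q \in H').
  by apply/in_hsys; exists (horn_of_rule q) => //; left; rewrite horn_rule_of.
have [/eqP e1|ne1] := boolP (q == horn_rule h); first by apply/in_hsys; exists h; [|left].
have [/eqP e2|ne2] := boolP (q == barr (horn_rule h)); first by apply/in_hsys; exists h; [|right].
exfalso; apply: (indep h _ hin qH qH'); rewrite /hdep horn_rule_of.
apply: rtc_step (rtc_refl _ _); split=> //.
- by apply/in_hsys; exists h; [exact: sub | left].
- by apply/in_hsys; exists (horn_of_rule q) => //; left; rewrite horn_rule_of.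
- by case: ep => ep; subst p; rewrite qp ?orbT.
Qed.

Lemma in_flatten_map (A : Type) (T : eqType) (f : A -> seq T) (l : seq A) e x :
  List.In e l -> x \in f e -> x \in flatten (map f l).
Proof.
elim: l => [//|a l IH] /= [->|he] hx; rewrite mem_cat ?hx //.
by rewrite IH ?orbT.
Qed.

Theorem mainTheorem7 (E : finType) (U S : Type) (G : gseq E U S) (C : constr E U)
  (H' : seq (horn E)) :
  (0 < #|E|)%N ->
  is_gseq G ->
  is_constraint C ->
  fracturable (H_of (sys_of_constr C)) H' ->
  satisfies G C ->
  satisfies (saturate H' G) (fracture C (hsys H')).
Proof.
move=> _ hg [[_ _ edge_verts _ _] _] hfr [hv he]; split=> //=.
move=> w u G'' a /List.in_map_iff [[[w0 u0] [G' a0]] [[<- <- <- <-] hin]].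
have [t [hl hw]] := he w0 u0 G' a0 hin.
have Vw : gvert G w0 by apply: hv; case: (edge_verts _ _ _ hin).
have upward p q : p \in hsys H' -> q \in G' -> q.1 \in p.2 -> q \in hsys H'.
  move=> hp hq; apply: (fracturable_upward hfr hp).
  exact: (in_flatten_map (f := fun e => e.2.1) hin).
have [t' hl' hw'] := lang_transfer (sat_dom hg) (@sat_rules_closed _ _ _ G H')
  upward hl Vw (walk_mono (@sat_base _ _ _ G H') hw).
by exists t'; split.
Qed.
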